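(* Let $f\in\mathcal{C}$ be differentiable on $(0,\infty)$. Let $(P,Q)$ and $(P',Q')$ be two pairs of mutually absolutely continuous probability measures ($P\ll Q\ll P$, $P'\ll Q'\ll P'$). If $E_\gamma(P\|Q)=E_\gamma(P'\|Q')$ and $E_\gamma(Q\|P)=E_\gamma(Q'\|P')$ for all $\gamma\ge1$, then $D_f(P\|Q)=D_f(P'\|Q')$. Likewise, if $\mathcal{I}_\omega(P\|Q)=\mathcal{I}_\omega(P'\|Q')$ for all $\omega\in(0,1)$, then $D_f(P\|Q)=D_f(P'\|Q')$.
   Context: $\mathcal{C}$ is the set of convex $f\colon(0,\infty)\to\mathbb{R}$ with $f(1)=0$. For densities $p,q$ w.r.t. a dominating measure $\mu$, $D_f(P\|Q):=\int qf(p/q)\,\mathrm{d}\mu$ (standard conventions at $0$). $E_\gamma(P\|Q):=\sup_U(P(U)-\gamma Q(U))$ for $\gamma\ge1$; $\mathcal{I}_\omega(P\|Q):=D_{\phi_\omega}(P\|Q)$ with $\phi_\omega(t)=\min\{\omega,1-\omega\}-\min\{\omega t,1-\omega\}$. *)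

From HB Require Import structures.
From mathcomp Require Import all_boot all_order all_algebra.
From mathcomp Require Import all_classical all_reals all_analysis.
Set Implicit Arguments. Unset Strict Implicit. Unset Printing Implicit Defensive.
Import Order.TTheory GRing.Theory Num.Theory.
Import numFieldNormedType.Exports.
Local Open Scope classical_set_scope.
Local Open Scope ring_scope.

Definition convex_pos (R : realType) (f : R -> R) : Prop :=
  forall x y t : R, 0 < x -> 0 < y -> 0 <= t -> t <= 1 ->
    f (t * x + (1 - t) * y) <= t * f x + (1 - t) * f y.

Definition classC (R : realType) (f : R -> R) : Prop :=
  convex_pos f /\ f 1 = 0.

(* Conventions at 0: f(0) := lim_{t -> 0+} f(t),
   0 f(a/0) := a * lim_{t -> oo} f(t)/t, and 0 f(0/0) := 0. *)
Definition f_at0 (R : realType) (f : R -> R) : \bar R :=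
  lim ((fun t : R => (f t)%:E) @ 0^'+).
Definition f_slope_oo (R : realType) (f : R -> R) : \bar R :=
  lim ((fun t : R => (f t / t)%:E) @ +oo).

Definition fdiv_integrand (R : realType) (f : R -> R) (p q : R) : \bar R :=
  if 0 < q then
    (if 0 < p then (q * f (p / q))%:E else (q%:E * f_at0 f)%E)
  else
    (if 0 < p then (p%:E * f_slope_oo f)%E else 0%E).

Definition fdiv (d : measure_display) (T : measurableType d) (R : realType)
  (mu : {measure set T -> \bar R}) (f : R -> R) (p q : T -> R) : \bar R :=
  (\int[mu]_x fdiv_integrand f (p x) (q x))%E.

Definition is_density (d : measure_display) (T : measurableType d)
  (R : realType) (mu : {measure set T -> \bar R}) (P : set T -> \bar R)
  (p : T -> R) : Prop :=
  measurable_fun setT p /\ (forall x, 0 <= p x) /\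
  (forall A, measurable A -> P A = (\int[mu]_(x in A) (p x)%:E)%E).

Definition Egamma (d : measure_display) (T : measurableType d) (R : realType)
  (gamma : R) (P Q : set T -> \bar R) : \bar R :=
  ereal_sup [set (P U - gamma%:E * Q U)%E | U in measurable].

Definition phi (R : realType) (omega : R) (t : R) : R :=
  Num.min omega (1 - omega) - Num.min (omega * t) (1 - omega).

From HB Require Import structures.
From mathcomp Require Import all_boot all_order all_algebra.
From mathcomp Require Import all_classical all_reals all_analysis.
From mathcomp Require Import measurable_realfun ring lra.
Import Order.TTheory GRing.Theory Num.Theory.
Set Implicit Arguments. Unset Strict Implicit. Unset Printing Implicit Defensive.
Local Open Scope classical_set_scope.
Local Open Scope ring_scope.

(* Everything is read off the law nu of the likelihood ratio p/q under Q, a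
   probability on (0, +oo) with mean 1.  Transporting the integrals along p/q,
   D_f(P||Q) = int f dnu and E_g(P||Q) = C(g), where C(t) = int (y - t)^+ dnu
   is the stop-loss transform of nu, while E_(1/t)(Q||P) and I_(1/(1+t))(P||Q)
   are affine functions of C(t) with nonzero slope.  Hence either family of
   hypotheses makes the stop-loss transforms of the two ratio laws agree on
   (0, +oo).  The difference quotients of C converge to nu(]t, +oo[), so C
   determines nu, and with it every f-divergence. *)

Section density.
Local Open Scope ereal_scope.
Context d (T : measurableType d) (R : realType).
Variables (mu Q : {measure set T -> \bar R}) (q : T -> R).
Hypothesis hq : is_density mu Q q.

Let mq := hq.1.
Let q_ge0 := hq.2.1.
Let Qq := hq.2.2.

Import HBNNSimple.

Lemma integral_indic_density A : measurable A ->
  \int[mu]_x ((\1_A x)%:E * (q x)%:E) = Q A.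
Proof.
move=> mA; rewrite Qq // -[in RHS](setTI A) integral_mkcondr epatch_indic.
by apply: eq_integral => x _; rewrite muleC.
Qed.

Lemma integral_density_nnsfun (h : {nnsfun T >-> R}) :
  \int[mu]_x ((h x)%:E * (q x)%:E) = \int[Q]_x (h x)%:E.
Proof.
pose A r := h @^-1` [set r]; pose F r x := (r * \1_(A r) x)%:E.
have mA r : measurable (A r) by rewrite -[A r]setTI; exact: measurable_funP.
have hE x : (h x)%:E = \sum_(r \in range h) F r x.
  by rewrite fimfunE -fsumEFin.
have F_ge0 r x : 0 <= F r x by rewrite /F EFinM; exact: nnfun_muleindic_ge0.
have mF r : measurable_fun setT (F r).
  by apply/measurable_EFinP; apply: measurable_funM => //; exact: measurable_indic.
under eq_integral do rewrite hE ge0_mule_fsuml //.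
under [RHS]eq_integral do rewrite hE.
rewrite (ge0_integral_fsum _ _ (f := fun r x => F r x * (q x)%:E)) //; first last.
- by move=> r x _; apply: mule_ge0; rewrite ?F_ge0 // lee_fin.
- by move=> r; apply: emeasurable_funM => //; exact/measurable_EFinP.
rewrite (ge0_integral_fsum _ _ (f := F)) //.
apply: eq_fsbigr => r /[!inE] -[x _ <-].
rewrite /F; under eq_integral do rewrite EFinM -muleA.
rewrite ge0_integralZl ?lee_fin //; last 2 first.
- by apply: emeasurable_funM; apply/measurable_EFinP => //; exact: measurable_indic.
- by move=> y _; apply: mule_ge0; rewrite lee_fin.
rewrite integral_indic_density //.
under [RHS]eq_integral do rewrite EFinM.
rewrite ge0_integralZl ?lee_fin ?integral_indic ?setIT //.
exact/measurable_EFinP/measurable_indic.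
Qed.

Lemma ge0_integral_density (f : T -> \bar R) : measurable_fun setT f ->
  (forall x, 0 <= f x) -> \int[mu]_x (f x * (q x)%:E) = \int[Q]_x f x.
Proof.
move=> mf f0; pose h := nnsfun_approx measurableT mf.
have hf x : (h n x)%:E @[n --> \oo] --> f x by exact: cvg_nnsfun_approx.
have h_nd x : nondecreasing_seq (fun n => (h n x)%:E).
  by move=> m n mn; rewrite lee_fin; exact/lefP/nd_nnsfun_approx.
have mh n : measurable_fun setT (fun x => (h n x)%:E) by exact/measurable_EFinP.
have fE x : f x = limn (fun n => (h n x)%:E) by exact/esym/cvg_lim.
have fqE x : f x * (q x)%:E = limn (fun n => (h n x)%:E * (q x)%:E).
  by apply/esym/cvg_lim => //; apply: cvgeZr.
under eq_integral do rewrite fqE.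
under [RHS]eq_integral do rewrite fE.
rewrite !monotone_convergence //.
- by under eq_fun do rewrite integral_density_nnsfun.
- by move=> n x _; rewrite lee_fin.
- by move=> n; apply: emeasurable_funM => //; exact/measurable_EFinP.
- by move=> n x _; rewrite mule_ge0 ?lee_fin.
- by move=> x _ m n mn; rewrite lee_wpmul2r ?lee_fin //; exact: h_nd.
Qed.

Lemma integral_density (G : T -> R) : measurable_fun setT G ->
  \int[mu]_x (q x * G x)%:E = \int[Q]_x (G x)%:E.
Proof.
move=> mG; have mEG : measurable_fun setT (fun x => (G x)%:E).
  exact/measurable_EFinP.
rewrite integralE [RHS]integralE; congr (_ - _).
- rewrite -ge0_integral_density //; last exact: measurable_funepos.
  apply: eq_integral => x _; rewrite !funeposE -!EFin_max -EFinM.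
  by rewrite maxr_pMl // mul0r mulrC.
- rewrite -ge0_integral_density //; last exact: measurable_funeneg.
  apply: eq_integral => x _; rewrite !funenegE -!EFinN -!EFin_max -EFinM.
  by rewrite maxr_pMl // mul0r mulNr mulrC.
Qed.

End density.

Lemma integral_distribution_EFin d d' (T : measurableType d)
    (T' : measurableType d') (R : realType) (P : probability T R)
    (X : {RV P >-> T'}) (G : T' -> R) : measurable_fun setT G ->
  (\int[distribution P X]_y (G y)%:E = \int[P]_x (G (X x))%:E)%E.
Proof.
move=> mG; have mEG : measurable_fun setT (EFin \o G) by exact/measurable_EFinP.
rewrite integralE [RHS]integralE; congr (_ - _)%E.
- rewrite ge0_integral_distribution //; last exact: measurable_funepos.
  by rewrite -funepos_comp.
- rewrite ge0_integral_distribution //; last exact: measurable_funeneg.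
  by rewrite -funeneg_comp.
Qed.

Section mutual_densities.
Local Open Scope ereal_scope.
Context d (T : measurableType d) (R : realType).
Variables (mu P Q : {measure set T -> \bar R}) (p q : T -> R).
Hypotheses (hp : is_density mu P p) (hq : is_density mu Q q).

Lemma ae_density_eq0 : Q `<< P -> {ae mu, forall x, p x = 0%R -> q x = 0%R}.
Proof.
move=> QP; have [mp [_ Pp]] := hp; have [mq [q_ge0 Qq]] := hq.
pose A := p @^-1` [set 0%R].
have mA : measurable A by rewrite -[A]setTI; exact: mp.
have PA : P A = 0.
  by rewrite Pp // (eq_integral (cst 0)) ?integral0 // => x /[!inE] ->.
have QA : Q A = 0 by exact: (null_content_dominatesP _ _).1 QP A mA PA.
have mqA : measurable_fun A (fun x => (q x)%:E).
  by apply/measurable_EFinP; exact: measurable_funTS.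
have : \int[mu]_(x in A) `|(q x)%:E| = 0.
  by rewrite -QA Qq //; apply: eq_integral => x _; rewrite gee0_abs ?lee_fin.
move/(ae_eq_integral_abs mu mA mqA); apply: filterS => x qA0 px0.
by case: (qA0 px0).
Qed.

End mutual_densities.

Lemma ae_density_pos d (T : measurableType d) (R : realType)
    (mu P Q : {measure set T -> \bar R}) (p q : T -> R) :
  is_density mu P p -> is_density mu Q q -> P `<< Q -> Q `<< P ->
  {ae mu, forall x, (0 < p x) = (0 < q x)}.
Proof.
move=> hp hq PQ QP.
move: (ae_density_eq0 hp hq QP) (ae_density_eq0 hq hp PQ).
apply: filterS2 => x qp pq.
rewrite !lt0r hp.2.1 hq.2.1 !andbT.
by apply/idP/idP; apply: contra_neq; [exact: pq|exact: qp].
Qed.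

Lemma integrable_density d (T : measurableType d) (R : realType)
    (mu : {measure set T -> \bar R}) (P : probability T R) (p : T -> R) :
  is_density mu P p -> mu.-integrable setT (fun x => (p x)%:E).
Proof.
move=> [mp [p_ge0 Pp]]; apply/integrableP; split; first exact/measurable_EFinP.
under eq_integral do rewrite gee0_abs ?lee_fin //.
by rewrite -Pp // probability_setT ltry.
Qed.

Section Egamma_density.
Local Open Scope ereal_scope.
Context d (T : measurableType d) (R : realType).
Variables (mu : {measure set T -> \bar R}) (P Q : probability T R) (p q : T -> R).
Hypotheses (hp : is_density mu P p) (hq : is_density mu Q q).

Let h (c : R) x := (p x - c * q x)%R.

Let mh c : measurable_fun setT (h c).
Proof.
by apply: measurable_funB; [exact: hp.1|apply: measurable_funM => //; exact: hq.1].
Qed.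

Let integrable_h c : mu.-integrable setT (fun x => (h c x)%:E).
Proof.
rewrite /h; under eq_fun do rewrite EFinB EFinM.
apply: integrableB => //; first exact: integrable_density hp.
by apply: integrableZl => //; exact: integrable_density hq.
Qed.

Let integrable_h_pos c : mu.-integrable setT (fun x => (Num.max (h c x) 0)%:E).
Proof.
apply: le_integrable (integrable_h c) => //.
  by apply/measurable_EFinP; exact: measurable_maxr.
move=> x _; rewrite !abse_EFin lee_fin ger0_norm ?le_max ?lexx ?orbT //.
by rewrite ge_max normr_ge0 ler_norm.
Qed.

Lemma measure_subZ_density (c : R) U : measurable U ->
  P U - c%:E * Q U = \int[mu]_(x in U) (p x - c * q x)%:E.
Proof.
move=> mU; have ip := integrableS measurableT mU (subsetT U) (integrable_density hp).
have iq := integrableS measurableT mU (subsetT U) (integrable_density hq).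
by rewrite hp.2.2 // hq.2.2 // -integralZl // -integralB //; exact: integrableZl.
Qed.

Lemma Egamma_density (c : R) :
  Egamma c P Q = \int[mu]_x (Num.max (p x - c * q x) 0)%:E.
Proof.
have mh_pos : measurable_fun setT (fun x => (Num.max (h c x) 0)%:E).
  by apply/measurable_EFinP; exact: measurable_maxr.
apply/eqP; rewrite eq_le; apply/andP; split.
  apply: ub_ereal_sup => _ [U mU <-]; rewrite measure_subZ_density //.
  apply: (@le_trans _ _ (\int[mu]_(x in U) (Num.max (h c x) 0)%:E)).
    apply: le_integral => //; first exact: integrableS (integrable_h c).
      exact: integrableS (integrable_h_pos c).
    by move=> x _; rewrite lee_fin le_max lexx.
  apply: ge0_subset_integral => //.
  by move=> x _; rewrite lee_fin le_max lexx orbT.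
set U := h c @^-1` (`]0%R, +oo[%classic : set R).
have mU : measurable U by rewrite -[U]setTI; exact: mh.
apply: ereal_sup_ubound; exists U => //; rewrite measure_subZ_density //.
rewrite integral_mkcond; apply: eq_integral => x _; rewrite patchE.
case: ifPn => [|/negP]; rewrite inE /U /= in_itv /= andbT => hx.
- by rewrite max_l // ltW.
- by rewrite max_r // leNgt; exact/negP.
Qed.

End Egamma_density.

(* The two properties of the law of dP/dQ under Q when P and Q are mutually
   absolutely continuous. *)
Definition is_ratio_law (R : realType) (nu : probability R R) : Prop :=
  nu `]-oo, 0]%classic = 0%E /\ (\int[nu]_y y%:E = 1)%E.

Definition stop_loss (R : realType) (nu : {measure set R -> \bar R}) (t : R) :=
  (\int[nu]_y (Num.max (y - t) 0)%:E)%E.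

Section ratio_law.
Context (R : realType) (nu : probability R R).
Hypothesis hnu : is_ratio_law nu.

Lemma integral_abs_ratio_law : (\int[nu]_y `|y|%:E = 1)%E.
Proof.
rewrite -hnu.2; apply: ae_eq_integral => //.
  by apply/measurable_EFinP; exact: normr_measurable.
exists (`]-oo, 0]%classic : set R); split => //; first exact: hnu.1.
move=> y /= yE; rewrite in_itv /= leNgt; apply/negP => y0.
by apply: yE => _; rewrite gtr0_norm.
Qed.

Lemma integrable_ratio_law (G : R -> R) (a b : R) : measurable_fun setT G ->
  (forall y, `|G y| <= a + b * `|y|) -> nu.-integrable setT (fun y => (G y)%:E).
Proof.
move=> mG G_le.
have iabs : nu.-integrable setT (fun y => `|y|%:E).
  apply/integrableP; split; first by apply/measurable_EFinP; exact: normr_measurable.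
  under eq_integral do rewrite abse_EFin normr_id.
  by rewrite integral_abs_ratio_law ltry.
have iaff : nu.-integrable setT (fun y => (a + b * `|y|)%:E).
  under eq_fun do rewrite EFinD EFinM.
  by apply: integrableD => //; [exact: finite_measure_integrable_cst|exact: integrableZl].
apply: le_integrable iaff => //; first exact/measurable_EFinP.
by move=> y _; rewrite !abse_EFin lee_fin (le_trans (G_le y)) // ler_norm.
Qed.

Lemma integrable_hinge (t : R) :
  nu.-integrable setT (fun y => (Num.max (y - t) 0)%:E).
Proof.
apply: (@integrable_ratio_law _ `|t| 1).
  by apply: measurable_maxr => //; exact: measurable_funB.
move=> y; rewrite mul1r ger0_norm ?le_max ?lexx ?orbT // ge_max addr_ge0 // andbT.
by rewrite (le_trans (ler_norm _)) // (le_trans (ler_normB _ _)) // addrC.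
Qed.

Lemma stop_loss_fin_num t : stop_loss nu t \is a fin_num.
Proof. exact: integrable_fin_num (integrable_hinge t). Qed.

Lemma integral_hinge_affine (a b c t : R) :
  (\int[nu]_y (a + b * y + c * Num.max (y - t) 0)%:E =
   (a + b)%:E + c%:E * stop_loss nu t)%E.
Proof.
have iid : nu.-integrable setT EFin.
  by apply: (@integrable_ratio_law id 0 1) => // y; rewrite add0r mul1r.
under eq_integral do rewrite !EFinD !EFinM.
rewrite integralD //; last 2 first.
- by apply: integrableD => //; [exact: finite_measure_integrable_cst|exact: integrableZl].
- exact/integrableZl/integrable_hinge.
rewrite integralD //; [|exact: finite_measure_integrable_cst|exact: integrableZl].
rewrite integral_cst // [X in (_ * X)%E]probability_setT mule1 !integralZl //.
  by rewrite hnu.2 mule1 EFinD.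
exact: integrable_hinge.
Qed.

End ratio_law.

Lemma hinge_reflect (R : realFieldType) (t y : R) : 0 < t ->
  Num.max (1 - t^-1 * y) 0 = 1 - t^-1 * y + t^-1 * Num.max (y - t) 0.
Proof.
move=> t0; have ti0 : 0 < t^-1 by rewrite invr_gt0.
have tt : t^-1 * t = 1 by rewrite mulVf ?gt_eqF.
have [yt|yt] := leP y t.
  rewrite max_l; last by rewrite subr_ge0 -tt ler_pM2l.
  by rewrite max_r ?subr_le0 // mulr0 addr0.
rewrite max_r; last by rewrite subr_le0 -tt ler_pM2l // ltW.
rewrite max_l ?subr_ge0 ?ltW // mulrBr tt; ring.
Qed.

Lemma phi_hinge (R : realType) (t y : R) : 0 < t ->
  phi (1 + t)^-1 y = Num.min (1 + t)^-1 (1 - (1 + t)^-1) - (1 + t)^-1 * y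
                     + (1 + t)^-1 * Num.max (y - t) 0.
Proof.
move=> t0; set w := (1 + t)^-1; rewrite /phi -/w.
have w0 : 0 < w by rewrite invr_gt0 addr_gt0.
have wt : w * t = 1 - w by rewrite /w; field; rewrite gt_eqF // addr_gt0.
have [yt|yt] := leP y t.
  rewrite [Num.min (w * y) _]min_l; last by rewrite -wt ler_pM2l.
  by rewrite max_r ?subr_le0 // mulr0 addr0.
rewrite [Num.min (w * y) _]min_r; last by rewrite -wt ler_pM2l // ltW.
rewrite max_l ?subr_ge0 ?ltW // mulrBr wt; ring.
Qed.

Lemma ramp_hinge_diff (R : realFieldType) (t s k : R) : 0 < k ->
  k * (Num.max (s - t) 0 - Num.max (s - (t + k^-1)) 0) =
  Num.min (k * Num.max (s - t) 0) 1.
Proof.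
move=> k0; set e := k^-1; have e0 : 0 < e by rewrite invr_gt0.
have ke : k * e = 1 by rewrite mulfV ?gt_eqF.
have [st|st] := leP s t.
  rewrite max_r ?subr_le0 // max_r; last by rewrite subr_le0 ler_wpDr // ltW.
  by rewrite subrr mulr0 min_l.
have [se|se] := leP s (t + e).
  rewrite max_l ?subr_ge0 ?ltW // max_r ?subr_le0 // subr0 min_l //.
  by rewrite -ke ler_pM2l //; lra.
rewrite max_l ?subr_ge0 ?ltW // max_l ?subr_ge0 ?ltW //.
have -> : s - t - (s - (t + e)) = e by ring.
by rewrite ke min_r // -ke ler_pM2l //; lra.
Qed.

Section stop_loss_uniqueness.
Context (R : realType).

Lemma ratio_law_ray_le0 (nu : probability R R) (t : R) : is_ratio_law nu ->
  t <= 0 -> nu `]t, +oo[%classic = 1%E.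
Proof.
move=> [nu_le0 _] t0; rewrite -setCitvl probability_setC //.
suff -> : nu `]-oo, t]%classic = 0%E by rewrite sube0.
apply/eqP; rewrite -measure_le0 -nu_le0; apply: le_measure; rewrite ?inE //.
by apply: subset_itvl; rewrite bnd_simp.
Qed.

Let ramp (t : R) (n : nat) (y : R) := Num.min (n.+1%:R * Num.max (y - t) 0) 1.

Let integral_ramp (nu : probability R R) t n : is_ratio_law nu ->
  (\int[nu]_y (ramp t n y)%:E =
   n.+1%:R%:E * (stop_loss nu t - stop_loss nu (t + n.+1%:R^-1)))%E.
Proof.
move=> hnu; have it := integrable_hinge hnu t.
have it' := integrable_hinge hnu (t + n.+1%:R^-1).
rewrite /stop_loss -integralB // -integralZl //; last exact: integrableB.
by apply: eq_integral => y _; rewrite /ramp -ramp_hinge_diff ?ltr0Sn.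
Qed.

Let ramp_cvg t y : (ramp t n y)%:E @[n --> \oo] --> (\1_(`]t, +oo[%classic) y)%:E.
Proof.
rewrite indicE; have [ty|yt] := ltP t y.
  rewrite mem_set /=; last by rewrite in_itv /= ty.
  apply: cvg_near_cst; have yt0 : 0 < y - t by rewrite subr_gt0.
  apply: filterS (near_infty_natSinv_lt (PosNum yt0)) => n /= hn.
  rewrite /ramp max_l ?ltW // min_r //.
  by move/ltW: hn; rewrite -(ler_pM2l (ltr0Sn R n)) mulfV.
rewrite memNset /=; last by rewrite in_itv /= ltNge yt.
apply: cvg_near_cst; apply: nearW => n.
by rewrite /ramp max_r ?subr_le0 // mulr0 min_l.
Qed.

Lemma ray_stop_loss (nu : probability R R) t : is_ratio_law nu ->
  nu `]t, +oo[%classic =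
  limn (fun n => n.+1%:R%:E * (stop_loss nu t - stop_loss nu (t + n.+1%:R^-1)))%E.
Proof.
move=> hnu; under [in RHS]eq_fun do rewrite -integral_ramp //.
rewrite -monotone_convergence //.
- rewrite -(setIT `]t, +oo[%classic) -integral_indic //.
  by apply: eq_integral => y _; apply/esym/cvg_lim => //; exact: ramp_cvg.
- move=> n; apply/measurable_EFinP; apply: measurable_minr => //.
  apply: measurable_funM => //; apply: measurable_maxr => //.
  exact: measurable_funB.
- by move=> n y _; rewrite lee_fin le_min ler01 andbT mulr_ge0 // le_max lexx orbT.
- move=> y _ m n mn; rewrite lee_fin le_min2 //.
  by rewrite ler_wpM2r ?le_max ?lexx ?orbT ?ler_nat.
Qed.

Lemma eq_ratio_law (nu1 nu2 : probability R R) :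
  is_ratio_law nu1 -> is_ratio_law nu2 ->
  (forall t, 0 < t -> stop_loss nu1 t = stop_loss nu2 t) ->
  forall A, measurable A -> nu1 A = nu2 A.
Proof.
move=> h1 h2 eq12.
have eq_ray t : nu1 `]t, +oo[%classic = nu2 `]t, +oo[%classic.
  have [t0|t0] := ltP 0 t; last by rewrite !ratio_law_ray_le0.
  rewrite !ray_stop_loss //; apply/congr_lim/funext => n.
  by rewrite !eq12 // addr_gt0 // invr_gt0 ltr0Sn.
apply: (measure_unique (RGenOInfty.G (R:=R)) (fun n => `]-(n%:R), +oo[%classic)).
- exact: RGenOInfty.measurableE.
- move=> _ _ [x ->] [y ->]; exists (Num.max x y); apply/seteqP; split => z /=;
    by rewrite !in_itv /= !andbT gt_max => /andP.
- by move=> n; exists (- n%:R).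
- apply/seteqP; split => y // _ /=; exists (Num.Def.trunc (- y)).+1 => //=.
  by rewrite in_itv /= andbT ltrNl truncnS_gt.
- by move=> _ [x ->]; exact: eq_ray.
- by move=> n; rewrite (le_lt_trans (probability_le1 _ _)) ?ltry.
Qed.

End stop_loss_uniqueness.

Lemma measurable_inv (R : realType) : measurable_fun [set: R] (@GRing.inv R).
Proof.
rewrite (_ : GRing.inv = fun x => if x == 0 then 0 else x^-1); last first.
  by apply/funext => x; case: eqP => // ->; rewrite invr0.
apply: measurable_fun_if => //; first exact: measurable_fun_eqr.
rewrite setTI (_ : _ @^-1` _ = [set x | x != 0]); last first.
  by apply/seteqP; split => x /=; case: eqP.
apply: open_continuous_measurable_fun; first exact: open_neq.
by move=> x; rewrite inE /= => x0; exact: inv_continuous.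
Qed.

Section fdiv_integrand.
Context (R : realType).

Lemma f_at0_eq (f g : R -> R) : (forall t, 0 < t -> f t = g t) -> f_at0 f = f_at0 g.
Proof.
move=> fg; rewrite /f_at0; congr lim.
by apply/seteqP; split; apply: near_eq_cvg; near=> t; rewrite fg //; near: t;
  exact: nbhs_right_gt.
Unshelve. all: by end_near. Qed.

Lemma f_slope_oo_eq (f g : R -> R) : (forall t, 0 < t -> f t = g t) ->
  f_slope_oo f = f_slope_oo g.
Proof.
move=> fg; rewrite /f_slope_oo; congr lim.
by apply/seteqP; split; apply: near_eq_cvg; near=> t; rewrite fg //; near: t;
  exact: nbhs_pinfty_gt.
Unshelve. all: by end_near. Qed.

Lemma fdiv_integrand_eq (f g : R -> R) : (forall t, 0 < t -> f t = g t) ->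
  fdiv_integrand f = fdiv_integrand g.
Proof.
move=> fg; apply/funext => a; apply/funext => b; rewrite /fdiv_integrand.
rewrite (f_at0_eq fg) (f_slope_oo_eq fg).
by case: ifPn => b0; case: ifPn => a0 //; rewrite fg // divr_gt0.
Qed.

Lemma measurable_fdiv_integrand d (T : measurableType d) (f : R -> R)
    (p q : T -> R) :
  measurable_fun setT f -> measurable_fun setT p -> measurable_fun setT q ->
  measurable_fun setT (fun x => fdiv_integrand f (p x) (q x)).
Proof.
move=> mf mp mq; rewrite /fdiv_integrand.
have mpq : measurable_fun setT (fun x => p x / q x).
  by apply: measurable_funM => //; apply: measurableT_comp => //;
    exact: measurable_inv.
apply: measurable_fun_ifT; first exact: measurable_fun_ltr.
- apply: measurable_fun_ifT; first exact: measurable_fun_ltr.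
    by apply/measurable_EFinP; apply: measurable_funM => //; exact: measurableT_comp.
  by apply: emeasurable_funM => //; exact/measurable_EFinP.
- apply: measurable_fun_ifT => //; first exact: measurable_fun_ltr.
  by apply: emeasurable_funM => //; exact/measurable_EFinP.
Qed.

End fdiv_integrand.

Section likelihood_ratio.
Context d (T : measurableType d) (R : realType).
Variables (mu : {measure set T -> \bar R}) (P Q : probability T R) (p q : T -> R).
Hypotheses (PQ : P `<< Q) (QP : Q `<< P).
Hypotheses (hp : is_density mu P p) (hq : is_density mu Q q).

Let measurable_lratio : measurable_fun setT (fun x => p x / q x).
Proof.
have [mp _] := hp; have [mq _] := hq.
apply: measurable_funM => //; apply: measurableT_comp => //.
exact: measurable_inv.
Qed.

(* On {q = 0} the junk value p x / 0 = 0 is harmless: that set is Q-null. *)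
Definition lratio_law : probability R R := distribution Q
  (HB.pack (fun x => p x / q x) (isMeasurableFun.Build _ _ _ _ _ measurable_lratio)).

(* p and q vanish together off a mu-null set, so an integrand only matters
   where both are positive or both vanish. *)
Lemma integral_lratio_law (G : R -> R) (g : T -> \bar R) :
  measurable_fun setT G -> measurable_fun setT g ->
  (forall x, 0 < p x -> 0 < q x -> g x = (q x * G (p x / q x))%:E) ->
  (forall x, p x = 0 -> q x = 0 -> g x = 0%E) ->
  (\int[mu]_x g x = \int[lratio_law]_y (G y)%:E)%E.
Proof.
move=> mG mg g_pos g_zero.
rewrite integral_distribution_EFin // -(integral_density hq); last first.
  exact: measurableT_comp mG measurable_lratio.
apply: ae_eq_integral => //.
  apply/measurable_EFinP; apply: measurable_funM; first exact: hq.1.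
  exact: measurableT_comp mG measurable_lratio.
move: (ae_density_pos hp hq PQ QP); apply: filterS => x pq _ /=.
have [p0|] := ltP 0 (p x); first by rewrite g_pos // -pq.
rewrite le_eqVlt ltNge hp.2.1 orbF => /eqP px.
have qx : q x = 0 by apply/eqP; rewrite eq_le hq.2.1 andbT leNgt -pq px ltxx.
by rewrite g_zero // qx mul0r.
Qed.

Lemma lratio_law_is_ratio_law : is_ratio_law lratio_law.
Proof.
have [mp [p_ge0 Pp]] := hp; split.
  rewrite -(setIT `]-oo, 0]%classic) -integral_indic //.
  rewrite -(integral_lratio_law (g := cst 0%E)) ?integral0 //.
  move=> x px qx; rewrite indicE memNset ?mulr0 //=.
  by rewrite in_itv /= leNgt divr_gt0.
rewrite -(integral_lratio_law (g := fun x => (p x)%:E)) //.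
- by rewrite -Pp // probability_setT.
- exact/measurable_EFinP.
- by move=> x _ qx; rewrite mulrC divfK ?gt_eqF.
- by move=> x ->.
Qed.

Lemma fdiv_lratio_law (f F : R -> R) : measurable_fun setT F ->
  (forall y, 0 < y -> F y = f y) ->
  fdiv mu f p q = (\int[lratio_law]_y (F y)%:E)%E.
Proof.
move=> mF Ff; rewrite /fdiv -(fdiv_integrand_eq Ff).
apply: integral_lratio_law => //.
- by apply: measurable_fdiv_integrand => //; [exact: hp.1|exact: hq.1].
- by move=> x px qx; rewrite /fdiv_integrand px qx.
- by move=> x -> ->; rewrite /fdiv_integrand ltxx.
Qed.

Lemma Egamma_lratio_law (c : R) : Egamma c P Q = stop_loss lratio_law c.
Proof.
rewrite (Egamma_density hp hq); apply: integral_lratio_law => //.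
- by apply: measurable_maxr => //; exact: measurable_funB.
- apply/measurable_EFinP; apply: measurable_maxr => //; apply: measurable_funB.
    exact: hp.1.
  by apply: measurable_funM => //; exact: hq.1.
- move=> x px qx; rewrite maxr_pMr ?ltW // mulr0 mulrBr mulrCA divff ?gt_eqF //.
  by rewrite mulr1 [q x * c]mulrC.
- by move=> x -> ->; rewrite mulr0 subr0 maxxx.
Qed.

Lemma Egamma_swap_lratio_law (t : R) : 0 < t ->
  Egamma t^-1 Q P = ((1 - t^-1)%:E + t^-1%:E * stop_loss lratio_law t)%E.
Proof.
move=> t0; rewrite (Egamma_density hq hp).
rewrite -(integral_hinge_affine lratio_law_is_ratio_law).
apply: integral_lratio_law.
- apply: measurable_funD; first by apply: measurable_funD => //; exact: measurable_funM.
  apply: measurable_funM => //; apply: measurable_maxr => //; exact: measurable_funB.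
- apply/measurable_EFinP; apply: measurable_maxr => //; apply: measurable_funB.
    exact: hq.1.
  by apply: measurable_funM => //; exact: hp.1.
- move=> x px qx; rewrite mulNr -hinge_reflect // maxr_pMr ?ltW // mulr0.
  by rewrite mulrBr mulr1 mulrCA [q x * (p x / q x)]mulrCA divff ?gt_eqF // mulr1.
- by move=> x -> ->; rewrite mulr0 subr0 maxxx.
Qed.

Lemma fdiv_phi_lratio_law (t : R) : 0 < t ->
  fdiv mu (phi (1 + t)^-1) p q =
  ((Num.min (1 + t)^-1 (1 - (1 + t)^-1) - (1 + t)^-1)%:E +
   ((1 + t)^-1)%:E * stop_loss lratio_law t)%E.
Proof.
move=> t0; rewrite (@fdiv_lratio_law _ (phi (1 + t)^-1)) //; last first.
  by apply: measurable_funB => //; apply: measurable_minr.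
under eq_integral do rewrite phi_hinge // -mulNr.
by rewrite (integral_hinge_affine lratio_law_is_ratio_law).
Qed.

End likelihood_ratio.

Lemma affine_cancel (R : realType) (a w : R) (x y : \bar R) :
  x \is a fin_num -> y \is a fin_num -> w != 0 ->
  (a%:E + w%:E * x = a%:E + w%:E * y)%E -> x = y.
Proof.
move=> /fineK <- /fineK <- w0; rewrite -!EFinM -!EFinD => -[].
by move=> /addrI /(mulfI w0) ->.
Qed.

Lemma measurable_extend_derivable (R : realType) (f : R -> R) :
  (forall x, 0 < x -> derivable f x 1) ->
  measurable_fun setT (fun y : R => if 0 < y then f y else 0).
Proof.
move=> f_der; apply: measurable_fun_if => //; first exact: measurable_fun_ltr.
rewrite setTI (_ : _ @^-1` _ = `]0, +oo[%classic); last first.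
  by apply/seteqP; split => x /=; rewrite in_itv /= andbT.
apply: subspace_continuous_measurable_fun => //.
by apply: derivable_within_continuous => x; rewrite in_itv /= andbT; exact: f_der.
Qed.

Theorem corollary1 (R : realType) (f : R -> R)
  (d : measure_display) (T : measurableType d)
  (d' : measure_display) (T' : measurableType d')
  (P Q : probability T R) (P' Q' : probability T' R)
  (mu : {measure set T -> \bar R}) (mu' : {measure set T' -> \bar R})
  (p q : T -> R) (p' q' : T' -> R) :
  classC f ->
  (forall x, 0 < x -> derivable f x 1) ->
  P `<< Q -> Q `<< P -> P' `<< Q' -> Q' `<< P' ->
  is_density mu P p -> is_density mu Q q ->
  is_density mu' P' p' -> is_density mu' Q' q' ->
  ((forall gamma : R, 1 <= gamma ->
       Egamma gamma P Q = Egamma gamma P' Q' /\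
       Egamma gamma Q P = Egamma gamma Q' P') ->
     fdiv mu f p q = fdiv mu' f p' q') /\
  ((forall omega : R, 0 < omega < 1 ->
       fdiv mu (phi omega) p q = fdiv mu' (phi omega) p' q') ->
     fdiv mu f p q = fdiv mu' f p' q').
Proof.
move=> _ f_der PQ QP PQ' QP' hp hq hp' hq'.
have hnu := lratio_law_is_ratio_law PQ QP hp hq.
have hnu' := lratio_law_is_ratio_law PQ' QP' hp' hq'.
have fdiv_eq : (forall t, 0 < t -> stop_loss (lratio_law hp hq) t =
                                   stop_loss (lratio_law hp' hq') t) ->
    fdiv mu f p q = fdiv mu' f p' q'.
  move=> eqC; have mF := measurable_extend_derivable f_der.
  have Ff y : 0 < y -> (if 0 < y then f y else 0) = f y by move=> ->.
  rewrite (fdiv_lratio_law PQ QP hp hq mF Ff) (fdiv_lratio_law PQ' QP' hp' hq' mF Ff).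
  by apply: eq_measure_integral => A mA _; exact: eq_ratio_law hnu hnu' eqC A mA.
split => H; apply: fdiv_eq => t t0.
- have [t1|t1] := leP 1 t.
    by rewrite -(Egamma_lratio_law PQ QP) -(Egamma_lratio_law PQ' QP') (H t t1).1.
  have t1' : 1 <= t^-1 by rewrite invf_ge1 // ltW.
  move: (H _ t1').2; rewrite (Egamma_swap_lratio_law PQ QP hp hq t0).
  rewrite (Egamma_swap_lratio_law PQ' QP' hp' hq' t0).
  by apply: affine_cancel; [exact: stop_loss_fin_num..|rewrite invr_eq0 gt_eqF].
- have w01 : 0 < (1 + t)^-1 < 1.
    by rewrite invr_gt0 addr_gt0 //= invf_lt1 ?addr_gt0 // ltrDl.
  move: (H _ w01); rewrite (fdiv_phi_lratio_law PQ QP hp hq t0).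
  rewrite (fdiv_phi_lratio_law PQ' QP' hp' hq' t0).
  by apply: affine_cancel; [exact: stop_loss_fin_num..|rewrite invr_eq0 gt_eqF ?addr_gt0].
Qed.
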